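(* Let $f:\mathbb{R}\to\mathbb{R}$ and $g:\mathbb{R}\to\mathbb{R}$ be real functions that are (real-)analytic in a neighborhood $U$ of a point $x_0\in\mathbb{R}$. Let $K\ge 0$ be an integer such that $f^{(j)}(x_0)=g^{(j)}(x_0)=0$ for $j=0,1,\dots,K$, and $g^{(K+1)}(x_0)\neq 0$. Let $R>0$ be such that $V=[x_0-R,\,x_0+R]\subset U$ and such that $f^{(j)}(x)\neq 0$ and $g^{(j)}(x)\neq 0$ for all $x\in V$ with $x\neq x_0$ and all $j=0,1,\dots,K+1$. Then \[ \lim_{n\to\infty}\frac{I_n^f(x)}{I_n^g(x)}=\frac{f^{(K+1)}(x_0)}{g^{(K+1)}(x_0)}, \] and the convergence is uniform in $x\in V\setminus\{x_0\}$, where the sequences $I_n^f$, $I_n^g$ are constructed with $x_0$ as the lower limit of integration.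
   Context: For a continuous function $h:\mathbb{R}\to\mathbb{R}$ and the point $x_0\in\mathbb{R}$, the sequence of functions $I_n^h$ ($n=0,1,2,\dots$) is defined inductively by $I_0^h(x)=h(x)$ and $I_{n+1}^h(x)=\int_{x_0}^{x} I_n^h(t)\,dt$. The notation $h^{(j)}$ denotes the $j$-th derivative of $h$ (with $h^{(0)}=h$). *)

From Stdlib Require Import Reals.
From Coquelicot Require Import Coquelicot.
Open Scope R_scope.

Definition analytic_at (f : R -> R) (c : R) : Prop :=
  exists (a : nat -> R) (r : R), 0 < r /\
    forall x, Rabs (x - c) < r -> is_pseries a (x - c) (f x).

Definition analytic_on (U : R -> Prop) (f : R -> R) : Prop :=
  forall c, U c -> analytic_at f c.

Fixpoint Iint (h : R -> R) (x0 : R) (n : nat) : R -> R :=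
  match n with
  | O => h
  | S m => fun x => RInt (Iint h x0 m) x0 x
  end.

(* Since f is analytic at x0 with vanishing derivatives up to order K, a compactness argument
   gives |f t - A (t - x0)^(K+1)| <= B |t - x0|^(K+2) on V, with A = f^(K+1)(x0) / (K+1)!.
   Integrating n times from x0 preserves this shape: I_n^f(x) is A (x - x0)^(K+1+n) (K+1)!/(K+1+n)!
   up to B |x - x0|^(K+2+n) (K+2)!/(K+2+n)!, so dividing by the main term leaves a relative error
   of at most B R0 (K+2)/(n+1), uniformly on V.  The same holds for g with a nonzero leading
   coefficient, and the ratio of the two normalised integrals converges uniformly to the ratio
   of the leading coefficients.  In particular I_n^g does not vanish on V minus x0 for large n. *)

From Stdlib Require Import Reals Lra Lia Factorial.
From Coquelicot Require Import Coquelicot.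
Open Scope R_scope.

Section PowerSeriesExpansion.

Variables (f : R -> R) (a : nat -> R) (c r : R).
Hypothesis r_pos : 0 < r.
Hypothesis f_pseries : forall x, Rabs (x - c) < r -> is_pseries a (x - c) (f x).

Lemma pseries_in_radius (y : R) : Rabs y < r -> Rbar_lt (Rabs y) (CV_radius a).
Proof.
  intros Hy.
  set (s := (Rabs y + r) / 2).
  assert (Hs : Rbar_le s (CV_radius a)).
  { apply Rbar_not_lt_le; intros Hout.
    apply (CV_disk_outside a s); [rewrite Rabs_pos_eq; [exact Hout|] |].
    - unfold s; pose proof (Rabs_pos y); lra.
    - apply ex_series_lim_0, ex_pseries_R.
      exists (f (c + s)).
      assert (H := f_pseries (c + s)); replace (c + s - c) with s in H by ring.
      apply H; rewrite Rabs_pos_eq; unfold s; pose proof (Rabs_pos y); lra. }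
  eapply Rbar_lt_le_trans; [|exact Hs]; simpl; unfold s; lra.
Qed.

Lemma pseries_locally_eq : locally c (fun y => PSeries a (y - c) = f y).
Proof.
  exists (mkposreal r r_pos); intros y Hy.
  apply is_pseries_unique, f_pseries, Hy.
Qed.

Lemma pseries_continuous : continuous f c.
Proof.
  apply (continuous_ext_loc _ (fun y => PSeries a (y - c))); [apply pseries_locally_eq|].
  apply (continuous_comp (fun y => y - c) (PSeries a)).
  - apply (continuous_minus (fun y => y) (fun _ => c));
      [apply continuous_id | apply continuous_const].
  - apply continuity_pt_filterlim, PSeries_continuity, pseries_in_radius.
    rewrite Rminus_diag, Rabs_R0; exact r_pos.
Qed.

Lemma pseries_Derive_n (k : nat) : Derive_n f k c = a k * INR (fact k).
Proof.
  rewrite <- (Derive_n_ext_loc _ f k c pseries_locally_eq).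
  unfold Rminus; rewrite Derive_n_comp_trans, Rplus_opp_r.
  apply Derive_n_coef.
  replace 0 with (Rabs 0) by apply Rabs_R0.
  apply pseries_in_radius; rewrite Rabs_R0; exact r_pos.
Qed.

Lemma CV_radius_decr_n (n : nat) : CV_radius (PS_decr_n a n) = CV_radius a.
Proof.
  induction n as [|n IH].
  - apply CV_radius_ext; reflexivity.
  - rewrite <- IH, <- (CV_radius_decr_1 (PS_decr_n a n)); apply CV_radius_ext.
    intros m; unfold PS_decr_n, PS_decr_1; f_equal; lia.
Qed.

Lemma pseries_remainder_local (m : nat) :
  exists M, forall t, Rabs (t - c) <= r / 2 ->
    Rabs (f t - sum_f_R0 (fun k => a k * (t - c) ^ k) m) <= M * Rabs (t - c) ^ S m.
Proof.
  set (q := PSeries (PS_decr_n a (S m))).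
  destruct (continuity_ab_maj (fun y => Rabs (q y)) (- (r / 2)) (r / 2)) as [y0 [Hmax _]].
  { lra. }
  { intros y Hy; apply (continuity_pt_comp q Rabs).
    - apply PSeries_continuity; rewrite CV_radius_decr_n.
      apply pseries_in_radius, Rle_lt_trans with (r / 2); [apply Rabs_le_between|]; lra.
    - apply continuity_pt_filterlim, continuous_Rabs. }
  exists (Rabs (q y0)); intros t Ht.
  assert (Hser : is_pseries a (t - c) (f t)) by (apply f_pseries; lra).
  rewrite <- (is_pseries_unique _ _ _ Hser), (PSeries_decr_n a m) by (eexists; exact Hser).
  replace (_ + _ - _) with ((t - c) ^ S m * q (t - c)) by (unfold q; ring).
  rewrite Rabs_mult, <- RPow_abs, Rmult_comm.
  apply Rmult_le_compat_r; [apply pow_le, Rabs_pos|].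
  apply (Hmax (t - c)), Rabs_le_between, Ht.
Qed.

End PowerSeriesExpansion.

Lemma local_pow_bound_extend (D : R -> R) (c rho R0 M : R) (m : nat) :
  0 < rho -> 0 <= R0 ->
  (forall t, Rabs (t - c) <= R0 -> continuity_pt D t) ->
  (forall t, Rabs (t - c) <= rho -> Rabs (D t) <= M * Rabs (t - c) ^ m) ->
  exists B, forall t, Rabs (t - c) <= R0 -> Rabs (D t) <= B * Rabs (t - c) ^ m.
Proof.
  intros Hrho HR0 Hcont Hloc.
  destruct (continuity_ab_maj (fun t => Rabs (D t)) (c - R0) (c + R0)) as [t0 [Hmax _]].
  { lra. }
  { intros t Ht; apply (continuity_pt_comp D Rabs).
    - apply Hcont, Rabs_le_between; lra.
    - apply continuity_pt_filterlim, continuous_Rabs. }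
  assert (Hrho_m : 0 < rho ^ m) by (apply pow_lt, Hrho).
  exists (Rabs M + Rabs (D t0) / rho ^ m); intros t Ht.
  assert (Hdist : 0 <= Rabs (t - c) ^ m) by (apply pow_le, Rabs_pos).
  assert (Hmax_nonneg : 0 <= Rabs (D t0) / rho ^ m)
    by (apply Rdiv_le_0_compat; [apply Rabs_pos | lra]).
  destruct (Rle_or_lt (Rabs (t - c)) rho) as [Hnear|Hfar].
  - assert (M <= Rabs M) by apply Rle_abs.
    specialize (Hloc t Hnear); nra.
  - assert (HD : Rabs (D t) <= Rabs (D t0)) by (apply Hmax; apply Rabs_le_between in Ht; lra).
    assert (Hpow : rho ^ m <= Rabs (t - c) ^ m) by (apply pow_incr; lra).
    assert (Rabs (D t0) = Rabs (D t0) / rho ^ m * rho ^ m) by (field; lra).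
    pose proof (Rabs_pos M); nra.
Qed.

Lemma analytic_at_continuous (f : R -> R) (c : R) : analytic_at f c -> continuous f c.
Proof. intros [a [r [Hr Hs]]]; exact (pseries_continuous f a c r Hr Hs). Qed.

Lemma analytic_at_leading_term_bound (f : R -> R) (c R0 : R) (K : nat) :
  analytic_at f c -> (forall j, (j <= K)%nat -> Derive_n f j c = 0) -> 0 <= R0 ->
  (forall t, Rabs (t - c) <= R0 -> continuous f t) ->
  exists B, forall t, Rabs (t - c) <= R0 ->
    Rabs (f t - Derive_n f (S K) c / INR (fact (S K)) * (t - c) ^ S K)
      <= B * Rabs (t - c) ^ S (S K).
Proof.
  intros [a [r [Hr Hs]]] Hzero HR0 Hcont.
  assert (Hcoef : forall k, a k = Derive_n f k c / INR (fact k)).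
  { intros k; rewrite (pseries_Derive_n f a c r Hr Hs); field; apply INR_fact_neq_0. }
  assert (Hsum : forall t, sum_f_R0 (fun k => a k * (t - c) ^ k) (S K)
                   = Derive_n f (S K) c / INR (fact (S K)) * (t - c) ^ S K).
  { intros t; rewrite tech5, sum_eq_R0; [rewrite Hcoef; ring|].
    intros k Hk; rewrite Hcoef, Hzero by exact Hk; unfold Rdiv; ring. }
  destruct (pseries_remainder_local f a c r Hr Hs (S K)) as [M HM].
  apply (local_pow_bound_extend _ c (r / 2) R0 M); [lra | exact HR0 | |].
  - intros t Ht; apply continuity_pt_filterlim.
    apply (continuous_minus f (fun t => _ * (t - c) ^ S K)); [apply Hcont, Ht|].
    apply (ex_derive_continuous (K := R_AbsRing) (V := R_NormedModule)); auto_derive; auto.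
  - intros t Ht; rewrite <- Hsum; apply HM, Ht.
Qed.

(* [Iint_pow k n (x - c)] is [Iint (fun t => (t - c) ^ k) c n x]. *)
Definition Iint_pow (k n : nat) (h : R) : R :=
  h ^ (k + n) * INR (fact k) / INR (fact (k + n)).

Lemma Iint_pow_0 (k : nat) (h : R) : Iint_pow k 0 h = h ^ k.
Proof. unfold Iint_pow; rewrite Nat.add_0_r; field; apply INR_fact_neq_0. Qed.

Lemma Iint_pow_S_at_0 (k n : nat) : Iint_pow k (S n) 0 = 0.
Proof. unfold Iint_pow; rewrite Nat.add_succ_r; simpl; unfold Rdiv; ring. Qed.

Lemma Iint_pow_abs (k n : nat) (h : R) : Rabs (Iint_pow k n h) = Iint_pow k n (Rabs h).
Proof.
  unfold Iint_pow, Rdiv; rewrite !Rabs_mult, Rabs_inv, RPow_abs.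
  rewrite !(Rabs_pos_eq (INR (fact _))) by apply pos_INR; reflexivity.
Qed.

Lemma Iint_pow_pos (k n : nat) (h : R) : 0 < h -> 0 < Iint_pow k n h.
Proof.
  intros Hh; unfold Iint_pow, Rdiv.
  apply Rmult_lt_0_compat; [apply Rmult_lt_0_compat; [apply pow_lt, Hh | apply INR_fact_lt_0]|].
  apply Rinv_0_lt_compat, INR_fact_lt_0.
Qed.

Lemma Iint_pow_neq_0 (k n : nat) (h : R) : h <> 0 -> Iint_pow k n h <> 0.
Proof.
  intros Hh H0; apply (Rlt_irrefl 0).
  rewrite <- Rabs_R0, <- H0 at 2; rewrite Iint_pow_abs; apply Iint_pow_pos, Rabs_pos_lt, Hh.
Qed.

Lemma Iint_pow_succ_l (k n : nat) (h : R) :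
  Iint_pow (S k) n h = h * INR (S k) / INR (S (k + n)) * Iint_pow k n h.
Proof.
  unfold Iint_pow; rewrite Nat.add_succ_l, !fact_simpl, !mult_INR; simpl pow.
  field; repeat split; try apply INR_fact_neq_0; apply not_0_INR; lia.
Qed.

Lemma is_derive_Iint_pow (k n : nat) (h : R) :
  is_derive (Iint_pow k (S n)) h (Iint_pow k n h).
Proof.
  unfold Iint_pow; rewrite Nat.add_succ_r.
  auto_derive; [exact I|].
  change (match (k + n)%nat with 0%nat => 1 | S _ => INR (k + n) + 1 end)
    with (INR (S (k + n))).
  change (fact (k + n) + (k + n) * fact (k + n))%nat with (S (k + n) * fact (k + n))%nat.
  rewrite mult_INR; field; split; [apply INR_fact_neq_0 | apply not_0_INR; lia].
Qed.

Lemma continuous_Iint_pow (k n : nat) (c t : R) :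
  continuous (fun t => Iint_pow k n (t - c)) t.
Proof.
  apply (ex_derive_continuous (K := R_AbsRing) (V := R_NormedModule)).
  unfold Iint_pow; auto_derive; exact I.
Qed.

Lemma continuous_Iint_pow_rev (k n : nat) (c t : R) :
  continuous (fun t => Iint_pow k n (c - t)) t.
Proof.
  apply (ex_derive_continuous (K := R_AbsRing) (V := R_NormedModule)).
  unfold Iint_pow; auto_derive; exact I.
Qed.

Lemma is_derive_Iint_pow_sub (k n : nat) (c t : R) :
  is_derive (fun t => Iint_pow k (S n) (t - c)) t (Iint_pow k n (t - c)).
Proof.
  replace (Iint_pow k n (t - c)) with (scal 1 (Iint_pow k n (t - c))) by apply Rmult_1_l.
  apply (is_derive_comp (Iint_pow k (S n)) (fun t => t - c)); [apply is_derive_Iint_pow|].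
  auto_derive; [exact I | ring].
Qed.

Lemma is_derive_Iint_pow_rev (k n : nat) (c t : R) :
  is_derive (fun t => - Iint_pow k (S n) (c - t)) t (Iint_pow k n (c - t)).
Proof.
  replace (Iint_pow k n (c - t)) with (opp (scal (-1) (Iint_pow k n (c - t))))
    by (change (- (-1 * Iint_pow k n (c - t)) = Iint_pow k n (c - t)); ring).
  apply (is_derive_opp (fun t => Iint_pow k (S n) (c - t))).
  apply (is_derive_comp (Iint_pow k (S n)) (fun t => c - t)); [apply is_derive_Iint_pow|].
  auto_derive; [exact I | ring].
Qed.

Lemma is_RInt_Iint_pow (k n : nat) (c x : R) :
  is_RInt (fun t => Iint_pow k n (t - c)) c x (Iint_pow k (S n) (x - c)).
Proof.
  replace (Iint_pow k (S n) (x - c))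
    with (minus (Iint_pow k (S n) (x - c)) (Iint_pow k (S n) (c - c))).
  2: { rewrite Rminus_diag, Iint_pow_S_at_0; exact (Rminus_0_r _). }
  apply (is_RInt_derive (fun t => Iint_pow k (S n) (t - c))); intros t _;
    [apply is_derive_Iint_pow_sub | apply continuous_Iint_pow].
Qed.

Lemma is_RInt_Iint_pow_rev (k n : nat) (c x : R) :
  is_RInt (fun t => Iint_pow k n (c - t)) x c (Iint_pow k (S n) (c - x)).
Proof.
  replace (Iint_pow k (S n) (c - x))
    with (minus (- Iint_pow k (S n) (c - c)) (- Iint_pow k (S n) (c - x))).
  2: { rewrite Rminus_diag, Iint_pow_S_at_0.
       change (- 0 - - Iint_pow k (S n) (c - x) = Iint_pow k (S n) (c - x)); ring. }
  apply (is_RInt_derive (fun t => - Iint_pow k (S n) (c - t))); intros t _;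
    [apply is_derive_Iint_pow_rev | apply continuous_Iint_pow_rev].
Qed.

Lemma RInt_abs_le_Iint_pow (d : R -> R) (B : R) (k n : nat) (c x : R) :
  ex_RInt d c x ->
  (forall t, Rmin c x <= t <= Rmax c x -> Rabs (d t) <= B * Iint_pow k n (Rabs (t - c))) ->
  Rabs (RInt d c x) <= B * Iint_pow k (S n) (Rabs (x - c)).
Proof.
  intros Hint Hd.
  destruct (Rle_or_lt c x) as [Hcx|Hxc].
  - rewrite (Rabs_pos_eq (x - c)) by lra.
    apply (norm_RInt_le d (fun t => B * Iint_pow k n (t - c)) c x); [exact Hcx | | |].
    + intros t Ht; rewrite <- (Rabs_pos_eq (t - c)) by lra.
      apply Hd; rewrite Rmin_left, Rmax_right; lra.
    + apply (RInt_correct (V := R_CompleteNormedModule)), Hint.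
    + apply (is_RInt_scal (fun t => Iint_pow k n (t - c))), is_RInt_Iint_pow.
  - rewrite Rabs_minus_sym, (Rabs_pos_eq (c - x)) by lra.
    assert (Hint' : ex_RInt d x c) by (apply ex_RInt_swap, Hint).
    rewrite <- opp_RInt_swap by exact Hint'.
    change (Rabs (- RInt d x c) <= B * Iint_pow k (S n) (c - x)); rewrite Rabs_Ropp.
    apply (norm_RInt_le d (fun t => B * Iint_pow k n (c - t)) x c); [lra | | |].
    + intros t Ht; rewrite <- (Rabs_pos_eq (c - t)) by lra; rewrite Rabs_minus_sym.
      apply Hd; rewrite Rmin_right, Rmax_left; lra.
    + apply (RInt_correct (V := R_CompleteNormedModule)), Hint'.
    + apply (is_RInt_scal (fun t => Iint_pow k n (c - t))), is_RInt_Iint_pow_rev.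
Qed.

Lemma Rabs_sub_le_between (c b z : R) :
  Rmin c b <= z <= Rmax c b -> Rabs (z - c) <= Rabs (b - c).
Proof.
  unfold Rmin, Rmax; destruct (Rle_dec c b); intros [Hl Hr];
    unfold Rabs; repeat destruct Rcase_abs; lra.
Qed.

Section IteratedIntegrals.

Variables (h : R -> R) (x0 R1 : R).
Hypothesis h_cont : forall t, Rabs (t - x0) < R1 -> continuous h t.

Lemma continuous_Iint (n : nat) (t : R) :
  Rabs (t - x0) < R1 -> continuous (Iint h x0 n) t.
Proof.
  revert t; induction n as [|n IH]; intros t Ht; [exact (h_cont t Ht)|].
  apply (ex_derive_continuous (K := R_AbsRing) (V := R_NormedModule)).
  exists (Iint h x0 n t); simpl.
  apply (is_derive_RInt (Iint h x0 n) (fun x => RInt (Iint h x0 n) x0 x) x0 t);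
    [| exact (IH t Ht)].
  assert (Hgap : 0 < R1 - Rabs (t - x0)) by lra.
  exists (mkposreal _ Hgap); intros b Hb; change (Rabs (b - t) < R1 - Rabs (t - x0)) in Hb.
  apply (RInt_correct (V := R_CompleteNormedModule)).
  apply (ex_RInt_continuous (V := R_CompleteNormedModule)); intros z Hz.
  apply IH, (Rle_lt_trans _ (Rabs (b - x0))); [exact (Rabs_sub_le_between _ _ _ Hz)|].
  replace (b - x0) with ((b - t) + (t - x0)) by ring.
  pose proof (Rabs_triang (b - t) (t - x0)); lra.
Qed.

Lemma ex_RInt_Iint (n : nat) (x : R) :
  Rabs (x - x0) < R1 -> ex_RInt (Iint h x0 n) x0 x.
Proof.
  intros Hx; apply (ex_RInt_continuous (V := R_CompleteNormedModule)); intros z Hz.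
  apply continuous_Iint, (Rle_lt_trans _ _ _ (Rabs_sub_le_between _ _ _ Hz) Hx).
Qed.

Lemma Iint_sub_Iint_pow_le (R0 a B : R) (k : nat) :
  R0 < R1 ->
  (forall t, Rabs (t - x0) <= R0 -> Rabs (h t - a * (t - x0) ^ k) <= B * Rabs (t - x0) ^ S k) ->
  forall n x, Rabs (x - x0) <= R0 ->
    Rabs (Iint h x0 n x - a * Iint_pow k n (x - x0)) <= B * Iint_pow (S k) n (Rabs (x - x0)).
Proof.
  intros HR Hh n; induction n as [|n IH]; intros x Hx.
  { rewrite !Iint_pow_0; exact (Hh x Hx). }
  assert (Hpoly : is_RInt (fun t => a * Iint_pow k n (t - x0)) x0 x
                    (a * Iint_pow k (S n) (x - x0)))
    by apply (is_RInt_scal (fun t => Iint_pow k n (t - x0))), is_RInt_Iint_pow.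
  simpl Iint; rewrite <- (is_RInt_unique _ _ _ _ Hpoly).
  change (RInt (Iint h x0 n) x0 x - RInt (fun t => a * Iint_pow k n (t - x0)) x0 x)
    with (minus (RInt (Iint h x0 n) x0 x) (RInt (fun t => a * Iint_pow k n (t - x0)) x0 x)).
  assert (Hex : ex_RInt (Iint h x0 n) x0 x) by (apply ex_RInt_Iint; lra).
  rewrite <- (RInt_minus (V := R_CompleteNormedModule)) by (auto; eexists; exact Hpoly).
  apply RInt_abs_le_Iint_pow.
  - apply (ex_RInt_minus (V := R_CompleteNormedModule)); [exact Hex | eexists; exact Hpoly].
  - intros t Ht; apply IH.
    apply (Rle_trans _ _ _ (Rabs_sub_le_between _ _ _ Ht) Hx).
Qed.

End IteratedIntegrals.

Lemma div_Iint_pow_sub_le (I a B R0 : R) (k n : nat) (h : R) :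
  h <> 0 -> Rabs h <= R0 ->
  Rabs (I - a * Iint_pow k n h) <= B * Iint_pow (S k) n (Rabs h) ->
  Rabs (I / Iint_pow k n h - a) <= B * R0 * INR (S k) / INR (S n).
Proof.
  intros Hh HR0 Herr.
  assert (Hh_pos : 0 < Rabs h) by (apply Rabs_pos_lt, Hh).
  assert (Hw : 0 < Iint_pow k n (Rabs h)) by (apply Iint_pow_pos, Hh_pos).
  assert (Hw' : 0 < Iint_pow (S k) n (Rabs h)) by (apply Iint_pow_pos, Hh_pos).
  assert (HP : Iint_pow k n h <> 0) by (apply Iint_pow_neq_0, Hh).
  assert (HB : 0 <= B) by (pose proof (Rabs_pos (I - a * Iint_pow k n h)); nra).
  assert (Hk : 0 < INR (S k)) by (apply lt_0_INR; lia).
  assert (Hn : 0 < INR (S n)) by (apply lt_0_INR; lia).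
  assert (Hkn : INR (S n) <= INR (S (k + n))) by (apply le_INR; lia).
  replace (I / Iint_pow k n h - a) with ((I - a * Iint_pow k n h) / Iint_pow k n h)
    by (field; exact HP).
  unfold Rdiv at 1; rewrite Rabs_mult, Rabs_inv, Iint_pow_abs.
  apply (Rle_trans _ (B * Iint_pow (S k) n (Rabs h) / Iint_pow k n (Rabs h))).
  { apply Rmult_le_compat_r; [left; apply Rinv_0_lt_compat, Hw | exact Herr]. }
  rewrite Iint_pow_succ_l.
  replace (B * (Rabs h * INR (S k) / INR (S (k + n)) * Iint_pow k n (Rabs h))
             / Iint_pow k n (Rabs h))
    with (B * Rabs h * INR (S k) / INR (S (k + n))) by (field; lra).
  unfold Rdiv; apply Rmult_le_compat.
  - apply Rmult_le_pos; [apply Rmult_le_pos|]; lra.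
  - left; apply Rinv_0_lt_compat; lra.
  - apply Rmult_le_compat_r; [lra|]; apply Rmult_le_compat_l; lra.
  - apply Rinv_le_contravar; lra.
Qed.

Lemma eventually_div_INR_le (C tau : R) :
  0 < tau -> exists N, forall n, (N <= n)%nat -> C / INR (S n) <= tau.
Proof.
  intros Htau; destruct (INR_unbounded (C / tau)) as [N HN]; exists N; intros n Hn.
  assert (Hn_pos : 0 < INR (S n)) by (apply lt_0_INR; lia).
  assert (HNn : INR N <= INR (S n)) by (apply le_INR; lia).
  apply Rle_div_l; [exact Hn_pos|].
  assert (HC : C = C / tau * tau) by (field; lra).
  rewrite HC; nra.
Qed.

Lemma Iint_div_Iint_pow_uniform (h : R -> R) (x0 R0 R1 : R) (K : nat) :
  analytic_at h x0 -> (forall j, (j <= K)%nat -> Derive_n h j x0 = 0) ->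
  0 < R0 < R1 -> (forall t, Rabs (t - x0) < R1 -> continuous h t) ->
  forall tau, 0 < tau -> exists N, forall n, (N <= n)%nat ->
    forall x, Rabs (x - x0) <= R0 -> x <> x0 ->
      Rabs (Iint h x0 n x / Iint_pow (S K) n (x - x0)
            - Derive_n h (S K) x0 / INR (fact (S K))) <= tau.
Proof.
  intros Han Hzero HR Hcont tau Htau.
  destruct (analytic_at_leading_term_bound h x0 R0 K Han Hzero) as [B HB]; [lra| |].
  { intros t Ht; apply Hcont; lra. }
  destruct (eventually_div_INR_le (B * R0 * INR (S (S K))) tau Htau) as [N HN].
  exists N; intros n Hn x Hx Hxx0.
  assert (Hh : x - x0 <> 0) by lra.
  apply (Rle_trans _ (B * R0 * INR (S (S K)) / INR (S n))); [|exact (HN n Hn)].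
  apply div_Iint_pow_sub_le; [exact Hh | exact Hx |].
  apply (Iint_sub_Iint_pow_le h x0 R1 Hcont R0); [lra | exact HB | exact Hx].
Qed.

Lemma div_perturb_lt (a b eps : R) : b <> 0 -> 0 < eps ->
  exists tau, 0 < tau /\ forall u v, Rabs u <= tau -> Rabs v <= tau ->
    b + v <> 0 /\ Rabs ((a + u) / (b + v) - a / b) < eps.
Proof.
  intros Hb Heps.
  assert (Hb_pos : 0 < Rabs b) by (apply Rabs_pos_lt, Hb).
  set (Z := Rabs a + Rabs b).
  assert (HZ : 0 < Z) by (unfold Z; pose proof (Rabs_pos a); lra).
  (* [tau] keeps [|b + v| >= |b| / 2] and the numerator [b u - a v] below [eps |b|^2 / 4]. *)
  set (tau := Rmin (Rabs b / 2) (eps * (Rabs b * Rabs b) / (4 * Z))).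
  assert (Htau_b : tau <= Rabs b / 2) by apply Rmin_l.
  assert (Htau_eps : tau * (4 * Z) <= eps * (Rabs b * Rabs b)).
  { apply Rle_div_r; [lra | apply Rmin_r]. }
  exists tau; split.
  { apply Rmin_pos; [lra|]; apply Rdiv_lt_0_compat; [apply Rmult_lt_0_compat|]; nra. }
  intros u v Hu Hv.
  assert (Hbv : Rabs b / 2 <= Rabs (b + v)).
  { pose proof (Rabs_triang (b + v) (- v)) as Htri.
    replace (b + v + - v) with b in Htri by ring; rewrite Rabs_Ropp in Htri; lra. }
  assert (Hbv0 : b + v <> 0) by (intros H0; rewrite H0, Rabs_R0 in Hbv; lra).
  split; [exact Hbv0|].
  replace ((a + u) / (b + v) - a / b) with ((b * u - a * v) / (b * (b + v))) by (field; auto).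
  assert (Hnum : Rabs (b * u - a * v) <= Z * tau).
  { unfold Rminus; eapply Rle_trans; [apply Rabs_triang|].
    rewrite Rabs_Ropp, !Rabs_mult; unfold Z.
    pose proof (Rabs_pos a); pose proof (Rabs_pos b); nra. }
  assert (Hden : Rabs b * (Rabs b / 2) <= Rabs (b * (b + v)))
    by (rewrite Rabs_mult; apply Rmult_le_compat_l; lra).
  rewrite Rabs_div by (apply Rmult_integral_contrapositive_currified; assumption).
  assert (0 < Rabs b * (Rabs b / 2)) by (apply Rmult_lt_0_compat; lra).
  apply Rlt_div_l; [lra|].
  assert (eps * (Rabs b * (Rabs b / 2)) <= eps * Rabs (b * (b + v)))
    by (apply Rmult_le_compat_l; lra).
  nra.
Qed.

Lemma open_enlarge_closed_ball (U : R -> Prop) (c r : R) :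
  open U -> 0 <= r -> (forall x, Rabs (x - c) <= r -> U x) ->
  exists r', r < r' /\ forall x, Rabs (x - c) < r' -> U x.
Proof.
  intros HU Hr Hball.
  assert (Hright : U (c + r)) by (apply Hball; replace (c + r - c) with r by ring;
                                  rewrite Rabs_pos_eq; lra).
  assert (Hleft : U (c - r)) by (apply Hball; replace (c - r - c) with (- r) by ring;
                                 rewrite Rabs_Ropp, Rabs_pos_eq; lra).
  destruct (HU _ Hright) as [e1 He1], (HU _ Hleft) as [e2 He2].
  assert (He : 0 < Rmin e1 e2) by (apply Rmin_pos; apply cond_pos).
  pose proof (Rmin_l e1 e2); pose proof (Rmin_r e1 e2).
  exists (r + Rmin e1 e2 / 2); split; [lra|]; intros x Hx.
  destruct (Rle_or_lt (Rabs (x - c)) r) as [Hin|Hout]; [exact (Hball x Hin)|].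
  destruct (Rle_or_lt c x).
  - apply He1; change (Rabs (x - (c + r)) < e1).
    unfold Rabs in *; repeat destruct Rcase_abs; lra.
  - apply He2; change (Rabs (x - (c - r)) < e2).
    unfold Rabs in *; repeat destruct Rcase_abs; lra.
Qed.

Theorem lemma1 (f g : R -> R) (x0 : R) (U : R -> Prop) (K : nat) (R0 : R) :
  open U -> U x0 ->
  analytic_on U f -> analytic_on U g ->
  (forall j, (j <= K)%nat -> Derive_n f j x0 = 0 /\ Derive_n g j x0 = 0) ->
  Derive_n g (S K) x0 <> 0 ->
  0 < R0 ->
  (forall x, Rabs (x - x0) <= R0 -> U x) ->
  (forall x j, Rabs (x - x0) <= R0 -> x <> x0 -> (j <= S K)%nat ->
     Derive_n f j x <> 0 /\ Derive_n g j x <> 0) ->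
  forall eps : R, 0 < eps ->
    exists N : nat, forall n : nat, (N <= n)%nat ->
      forall x : R, Rabs (x - x0) <= R0 -> x <> x0 ->
        Rabs (Iint f x0 n x / Iint g x0 n x
              - Derive_n f (S K) x0 / Derive_n g (S K) x0) < eps.
Proof.
  intros HU Hx0 Hf Hg Hzero HgK HR0 HV _ eps Heps.
  destruct (open_enlarge_closed_ball U x0 R0 HU (Rlt_le _ _ HR0) HV) as [R1 [HR1 HW]].
  assert (Hcont : forall h, analytic_on U h -> forall t, Rabs (t - x0) < R1 -> continuous h t)
    by (intros h Hh t Ht; apply analytic_at_continuous, Hh, HW, Ht).
  set (Af := Derive_n f (S K) x0 / INR (fact (S K))).
  set (Ag := Derive_n g (S K) x0 / INR (fact (S K))).
  assert (HAg : Ag <> 0)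
    by (apply Rmult_integral_contrapositive_currified;
        [exact HgK | apply Rinv_neq_0_compat, INR_fact_neq_0]).
  destruct (div_perturb_lt Af Ag eps HAg Heps) as [tau [Htau Hpert]].
  destruct (Iint_div_Iint_pow_uniform f x0 R0 R1 K (Hf x0 Hx0) (fun j Hj => proj1 (Hzero j Hj))
              (conj HR0 HR1) (Hcont f Hf) tau Htau) as [Nf HNf].
  destruct (Iint_div_Iint_pow_uniform g x0 R0 R1 K (Hg x0 Hx0) (fun j Hj => proj2 (Hzero j Hj))
              (conj HR0 HR1) (Hcont g Hg) tau Htau) as [Ng HNg].
  exists (Nat.max Nf Ng); intros n Hn x Hx Hxx0.
  set (w := Iint_pow (S K) n (x - x0)).
  assert (Hw : w <> 0) by (apply Iint_pow_neq_0; lra).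
  destruct (Hpert (Iint f x0 n x / w - Af) (Iint g x0 n x / w - Ag)
              (HNf n ltac:(lia) x Hx Hxx0) (HNg n ltac:(lia) x Hx Hxx0)) as [Hgw Hlt].
  rewrite Rplus_minus in Hgw; rewrite 2!Rplus_minus in Hlt.
  assert (Hig : Iint g x0 n x <> 0) by (intros H0; apply Hgw; rewrite H0; apply Rdiv_0_l).
  replace (Iint f x0 n x / Iint g x0 n x) with ((Iint f x0 n x / w) / (Iint g x0 n x / w))
    by (field; split; assumption).
  replace (Derive_n f (S K) x0 / Derive_n g (S K) x0) with (Af / Ag)
    by (unfold Af, Ag; field; split; [exact HgK | apply INR_fact_neq_0]).
  exact Hlt.
Qed.
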